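(* Let $B_0=\langle a,e,f\mid e^2=e,\ f^2=f,\ ef=fe=0,\ ea=af=a\rangle=\{0,a,e,f\}$. Then (i) the pseudovariety $\llbracket B_0\rrbracket$ is strictly join irreducible; (ii) $\llbracket B_0\rrbracket$ is not join irreducible; (iii) $\llbracket B_0^I\rrbracket$ is not strictly join irreducible.
   Context: $B_0$ is the four-element semigroup with zero $0$ given by the presentation (all products not determined by the relations are $0$). $B_0^I$ is $B_0$ with an external identity adjoined. A pseudovariety is a class of finite semigroups closed under finite direct products, subsemigroups and homomorphic images; $\llbracket S\rrbracket$ is the pseudovariety generated by $S$. In the lattice of pseudovarieties, $\mathbf{V}$ is join irreducible if $\mathbf{V}\subseteq\bigvee\mathscr{X}$ implies $\mathbf{V}\subseteq\mathbf{X}$ for some $\mathbf{X}\in\mathscr{X}$, and strictly join irreducible if $\mathbf{V}=\bigvee\mathscr{X}$ implies $\mathbf{V}\in\mathscr{X}$ (for every set $\mathscr{X}$ of pseudovarieties). *)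

From HB Require Import structures.
From mathcomp Require Import all_boot.

Set Implicit Arguments.
Unset Strict Implicit.
Unset Printing Implicit Defensive.

Record fsemigroup := FSemigroup {
  carrier :> finType;
  sop : carrier -> carrier -> carrier;
  sopA : associative sop;
  snonempty : 0 < #|carrier|
}.

Definition is_hom (S T : fsemigroup) (h : S -> T) : Prop :=
  forall x y : S, h (sop x y) = sop (h x) (h y).

Section Prod.
Variables S T : fsemigroup.
Definition prod_op (x y : S * T) : S * T := (sop x.1 y.1, sop x.2 y.2).
Lemma prod_opA : associative prod_op.
Proof. by move=> [? ?] [? ?] [? ?]; rewrite /prod_op /= !sopA. Qed.
Lemma prod_nonempty : 0 < #|{: S * T}|.
Proof. by rewrite card_prod muln_gt0 !snonempty. Qed.
Definition prod_sg : fsemigroup := FSemigroup prod_opA prod_nonempty.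
End Prod.

Definition triv_op (x y : unit) : unit := tt.
Lemma triv_opA : associative triv_op. Proof. by []. Qed.
Lemma triv_nonempty : 0 < #|{: unit}|. Proof. by rewrite card_unit. Qed.
Definition triv_sg : fsemigroup := FSemigroup triv_opA triv_nonempty.

(** S^I : S with an external identity adjoined (None is the new identity) *)
Section AdjI.
Variable S : fsemigroup.
Definition adjI_op (x y : option S) : option S :=
  match x, y with
  | None, _ => y
  | _, None => x
  | Some a, Some b => Some (sop a b)
  end.
Lemma adjI_opA : associative adjI_op.
Proof. by move=> [a|] [b|] [c|] //=; rewrite sopA. Qed.
Lemma adjI_nonempty : 0 < #|{: option S}|.
Proof. by rewrite card_option. Qed.
Definition adjI : fsemigroup := FSemigroup adjI_opA adjI_nonempty.
End AdjI.

Definition sgclass := fsemigroup -> Prop.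

Definition subclass (V W : sgclass) : Prop := forall S, V S -> W S.
Definition eqclass (V W : sgclass) : Prop := forall S, V S <-> W S.

(* Closed under finite direct products (the empty product being the trivial
   semigroup), subsemigroups (= domains of injective homomorphisms into a
   member, i.e. subsemigroups up to isomorphism) and homomorphic images. *)
Definition pseudovariety (V : sgclass) : Prop :=
  [/\ V triv_sg,
      (forall S T, V S -> V T -> V (prod_sg S T)),
      (forall (S T : fsemigroup) (h : S -> T),
          is_hom h -> injective h -> V T -> V S)
    & (forall (S T : fsemigroup) (h : S -> T),
          is_hom h -> (forall y : T, exists x : S, h x = y) -> V S -> V T)].

Definition gen (S : fsemigroup) : sgclass :=
  fun T => forall V, pseudovariety V -> V S -> V T.

Definition join (X : sgclass -> Prop) : sgclass :=
  fun T => forall V, pseudovariety V ->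
             (forall W, X W -> subclass W V) -> V T.

Definition join_irreducible (V : sgclass) : Prop :=
  forall X : sgclass -> Prop, (forall W, X W -> pseudovariety W) ->
    subclass V (join X) -> exists W, X W /\ subclass V W.

Definition strictly_join_irreducible (V : sgclass) : Prop :=
  forall X : sgclass -> Prop, (forall W, X W -> pseudovariety W) ->
    eqclass V (join X) -> exists W, X W /\ eqclass V W.

Inductive B0elt := B0z | B0a | B0e | B0f.

Definition B0_to (x : B0elt) : 'I_4 :=
  match x with B0z => inord 0 | B0a => inord 1 | B0e => inord 2 | B0f => inord 3 end.
Definition B0_of (i : 'I_4) : B0elt :=
  match val i with 0 => B0z | 1 => B0a | 2 => B0e | _ => B0f end.
Lemma B0_toK : cancel B0_to B0_of.
Proof. by case; rewrite /B0_of /= inordK. Qed.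

HB.instance Definition _ := Finite.copy B0elt (can_type B0_toK).

(* products not determined by the relations are 0 *)
Definition B0_op (x y : B0elt) : B0elt :=
  match x, y with
  | B0e, B0e => B0e
  | B0f, B0f => B0f
  | B0e, B0a => B0a
  | B0a, B0f => B0a
  | _, _ => B0z
  end.
Lemma B0_opA : associative B0_op.
Proof. by case; case; case. Qed.
Lemma B0_nonempty : 0 < #|{: B0elt}|.
Proof. by apply/card_gt0P; exists B0z. Qed.
Definition B0 : fsemigroup := FSemigroup B0_opA B0_nonempty.

From mathcomp Require Import all_boot.
From Stdlib Require Import Classical.

(** Inside [[B0]], which satisfies x^3 = x^2, x^2 z^2 = z^2 x^2 and
    x^2 p x^2 z^2 q z^2 = z^2 q z^2 x^2 p x^2, a semigroup violating
    x^2 y z^2 = x^2 z^2 y x^2 z^2 has B0 as a divisor: for E = x^2, F = z^2 and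
    a = E y F the third identity keeps a out of the ideal generated by EF, so
    E, F, a together with the elements whose ideal misses a form a subsemigroup
    mapping onto B0.  Hence in a join equal to [[B0]] every member either
    contains B0 or satisfies that last identity, which B0 does not.
    On the other hand B0^I is a quotient of a subsemigroup of
    (B0^I minus f) x (B0^I minus e), whose factors satisfy xyx = yxx and
    xyx = xxy respectively; B0 satisfies neither, so [[B0^I]] is the join of two
    pseudovarieties not containing B0. *)

Set Implicit Arguments.
Unset Strict Implicit.
Unset Printing Implicit Defensive.

Local Notation "x • y" := (sop x y) (at level 40, left associativity).

Lemma pseudovariety_bigcap (P : sgclass -> Prop) :
  pseudovariety (fun T => forall V, pseudovariety V -> P V -> V T).
Proof.
split.
- by move=> V [Vtriv].
- move=> S T HS HT V pvV PV; have [_ V_prod _ _] := pvV.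
  by apply: V_prod; [exact: HS | exact: HT].
- move=> S T h hh hi HT V pvV PV; have [_ _ V_sub _] := pvV.
  by apply: V_sub hh hi _; exact: HT.
- move=> S T h hh hs HS V pvV PV; have [_ _ _ V_quo] := pvV.
  by apply: V_quo hh hs _; exact: HS.
Qed.

Lemma gen_pv S : pseudovariety (gen S).
Proof. exact: pseudovariety_bigcap. Qed.

Lemma gen_self S : gen S S.
Proof. by move=> V _. Qed.
Arguments gen_self : clear implicits.

Lemma gen_min V S T : pseudovariety V -> V S -> gen S T -> V T.
Proof. by move=> PV VS; apply. Qed.

Lemma join_pv X : pseudovariety (join X).
Proof. exact: pseudovariety_bigcap. Qed.

Lemma join_ub X W T : X W -> W T -> join X T.
Proof. by move=> XW WT V _ /(_ W XW); apply. Qed.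

Lemma join_least X V T :
  pseudovariety V -> (forall W, X W -> subclass W V) -> join X T -> V T.
Proof. by move=> PV XV; apply. Qed.

Definition divides (S T : fsemigroup) : Prop :=
  exists (U : fsemigroup) (i : U -> T) (h : U -> S),
    [/\ is_hom i, injective i, is_hom h & forall x, exists u, h u = x].

Lemma pseudovariety_divides V S T : pseudovariety V -> divides S T -> V T -> V S.
Proof.
case=> _ _ V_sub V_quo [U [i [h [ih ii hh hs]]]] VT.
exact: V_quo hh hs (V_sub _ _ _ ih ii VT).
Qed.

Lemma gen_divides S T : divides S T -> gen T S.
Proof. by move=> dST V PV; exact: pseudovariety_divides. Qed.

Lemma divides_embedding (S T : fsemigroup) (i : S -> T) :
  is_hom i -> injective i -> divides S T.
Proof. by move=> ih ii; exists S, i, id; split=> // x; exists x. Qed.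

Section Subsemigroup.
Variables (T : fsemigroup) (P : pred T).
Hypothesis P_mul : forall x y, P x -> P y -> P (x • y).
Hypothesis P_inhabited : exists x, P x.

Definition sub_op (u v : {x : T | P x}) : {x : T | P x} :=
  exist _ (val u • val v) (P_mul (valP u) (valP v)).

Lemma sub_opA : associative sub_op.
Proof. by move=> u v w; apply: val_inj; exact: sopA. Qed.

Lemma sub_nonempty : 0 < #|{: {x : T | P x}}|.
Proof. by case: P_inhabited => x Px; apply/card_gt0P; exists (exist _ x Px). Qed.

Definition subsemigroup : fsemigroup := FSemigroup sub_opA sub_nonempty.

Lemma val_hom : is_hom (val : subsemigroup -> T).
Proof. by []. Qed.

Lemma subsemigroup_divides : divides subsemigroup T.
Proof. exact: divides_embedding val_hom val_inj. Qed.

End Subsemigroup.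

Arguments val_hom {T P P_mul P_inhabited}.

Lemma divides_restrict (S T : fsemigroup) (P : pred T) (h : T -> S) :
  (forall x y, P x -> P y -> P (x • y) /\ h (x • y) = h x • h y) ->
  (forall z : S, exists2 x, P x & h x = z) -> divides S T.
Proof.
move=> hP h_onto.
have P_mul x y : P x -> P y -> P (x • y) by move=> Px Py; case: (hP x y Px Py).
have P_inh : exists x, P x.
  by have /card_gt0P[z _] := snonempty S; case: (h_onto z) => x Px _; exists x.
exists (subsemigroup P_mul P_inh), val, (h \o val); split.
- exact: val_hom.
- exact: val_inj.
- by move=> u v; case: (hP _ _ (valP u) (valP v)).
- by move=> z; case: (h_onto z) => x Px <-; exists (exist _ x Px).
Qed.

Inductive term := Var of nat | Mul of term & term.

Declare Scope term_scope.
Delimit Scope term_scope with term.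
Infix "*" := Mul : term_scope.

Fixpoint eval (S : fsemigroup) (s : nat -> S) (t : term) : S :=
  match t with Var n => s n | Mul u v => eval s u • eval s v end.

Definition satisfies (e : term * term) : sgclass :=
  fun S => forall s : nat -> S, eval s e.1 = eval s e.2.

Lemma eval_hom (S T : fsemigroup) (h : S -> T) :
  is_hom h -> forall s t, h (eval s t) = eval (h \o s) t.
Proof. by move=> hh s; elim => //= u IHu v IHv; rewrite hh IHu IHv. Qed.

Lemma eq_eval (S : fsemigroup) (s s' : nat -> S) :
  s =1 s' -> forall t, eval s t = eval s' t.
Proof. by move=> ss'; elim => /= [n|u IHu v IHv]; rewrite ?ss' ?IHu ?IHv. Qed.

Lemma satisfies_pv e : pseudovariety (satisfies e).
Proof.
split.
- by move=> s; case: (eval s e.1); case: (eval s e.2).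
- move=> S T HS HT s.
  have fst_hom : is_hom (fst : prod_sg S T -> S) by [].
  have snd_hom : is_hom (snd : prod_sg S T -> T) by [].
  rewrite [eval s e.1]surjective_pairing [eval s e.2]surjective_pairing.
  by rewrite !(eval_hom fst_hom) !(eval_hom snd_hom) HS HT.
- by move=> S T h hh hi HT s; apply: hi; rewrite !(eval_hom hh) HT.
- move=> S T h hh hs HS s.
  have lift n : exists x : S, h x == s n by case: (hs (s n)) => x <-; exists x.
  have s_lift : s =1 h \o (fun n => xchoose (lift n)).
    by move=> n; apply/esym/eqP; exact: (xchooseP (lift n)).
  by rewrite !(eq_eval s_lift) -!(eval_hom hh) HS.
Qed.

Lemma gen_satisfies S T e : satisfies e S -> gen S T -> satisfies e T.
Proof. exact: gen_min (satisfies_pv e). Qed.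

Section B0Divisor.
Variables (S : fsemigroup) (e f a : S).
Hypotheses (ee : e • e = e) (ff : f • f = f) (ea : e • a = a) (af : a • f = a).

Definition avoids (w : S) : bool := [forall p, forall q, p • w • q != a].

Lemma avoidsP w : reflect (forall p q, p • w • q <> a) (avoids w).
Proof.
apply: (iffP forallP) => [H p q | H p]; first exact/eqP/(forallP (H p)).
by apply/forallP => q; apply/eqP.
Qed.

Lemma avoids_mull u w : avoids w -> avoids (u • w).
Proof. by move/avoidsP=> H; apply/avoidsP => p q; rewrite sopA; exact: H. Qed.

Lemma avoids_mulr w u : avoids w -> avoids (w • u).
Proof.
move/avoidsP=> H; apply/avoidsP => p q.
by have -> : p • (w • u) • q = p • w • (u • q) by rewrite !sopA.
Qed.

Hypotheses (ef_avoids : avoids (e • f)) (fe_avoids : avoids (f • e)).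

Lemma ae_avoids : avoids (a • e).
Proof. by rewrite -af -sopA; exact: avoids_mull. Qed.

Lemma fa_avoids : avoids (f • a).
Proof. by rewrite -ea sopA; exact: avoids_mulr. Qed.

Lemma aa_avoids : avoids (a • a).
Proof.
have -> : a • a = a • (f • e) • a by rewrite sopA af -sopA ea.
exact/avoids_mulr/avoids_mull.
Qed.

Lemma e_not_avoids : ~~ avoids e.
Proof. by apply/avoidsP => /(_ e a); rewrite ee ea. Qed.

Lemma f_not_avoids : ~~ avoids f.
Proof. by apply/avoidsP => /(_ a f); rewrite !af. Qed.

Lemma a_not_avoids : ~~ avoids a.
Proof. by apply/avoidsP => /(_ e f); rewrite ea af. Qed.

Lemma avoids_neq w x : avoids w -> ~~ avoids x -> w != x.
Proof. by move=> Hw Hx; apply: contraNneq Hx => <-. Qed.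

Lemma e_neq_f : e != f.
Proof. by apply: contraTneq ef_avoids => <-; rewrite ee e_not_avoids. Qed.

Lemma e_neq_a : e != a.
Proof. by apply: contraTneq ae_avoids => <-; rewrite ee e_not_avoids. Qed.

Lemma f_neq_a : f != a.
Proof. by apply: contraTneq fa_avoids => <-; rewrite ff f_not_avoids. Qed.

Definition B0_dom (w : S) : bool := [|| w == e, w == f, w == a | avoids w].

(* The elements avoiding [a] form an ideal, which [to_B0] collapses to [B0z]. *)
Definition to_B0 (w : S) : B0 :=
  if w == e then B0e else if w == f then B0f else if w == a then B0a else B0z.

Lemma to_B0_e : to_B0 e = B0e.
Proof. by rewrite /to_B0 eqxx. Qed.

Lemma to_B0_f : to_B0 f = B0f.
Proof. by rewrite /to_B0 eq_sym (negbTE e_neq_f) eqxx. Qed.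

Lemma to_B0_a : to_B0 a = B0a.
Proof. by rewrite /to_B0 eq_sym (negbTE e_neq_a) eq_sym (negbTE f_neq_a) eqxx. Qed.

Lemma to_B0_avoids w : avoids w -> to_B0 w = B0z.
Proof.
move=> Hw; rewrite /to_B0.
by rewrite !(negbTE (avoids_neq Hw _)) ?e_not_avoids ?f_not_avoids ?a_not_avoids.
Qed.

Lemma B0_domP w : B0_dom w -> [\/ w = e, w = f, w = a | avoids w].
Proof.
by case/or4P=> [/eqP|/eqP|/eqP|]; [apply: Or41 | apply: Or42 | apply: Or43 | apply: Or44].
Qed.

Lemma to_B0_mul u v : B0_dom u -> B0_dom v ->
  B0_dom (u • v) /\ to_B0 (u • v) = to_B0 u • to_B0 v.
Proof.
have zero w : avoids w -> B0_dom w /\ to_B0 w = B0z.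
  by move=> Hw; rewrite /B0_dom Hw !orbT to_B0_avoids.
have B0_zr (x : B0) : x • B0z = B0z by case: x.
move=> /B0_domP[->|->|->|Hu] /B0_domP[->|->|->|Hv];
  rewrite ?to_B0_e ?to_B0_f ?to_B0_a ?(to_B0_avoids Hu) ?(to_B0_avoids Hv) ?B0_zr /=;
  try by apply: zero; auto using avoids_mull, avoids_mulr, ae_avoids, fa_avoids, aa_avoids.
- by rewrite ee /B0_dom eqxx to_B0_e.
- by rewrite ea /B0_dom eqxx !orbT to_B0_a.
- by rewrite ff /B0_dom eqxx orbT to_B0_f.
- by rewrite af /B0_dom eqxx !orbT to_B0_a.
Qed.

Lemma B0_divides : divides B0 S.
Proof.
apply: (divides_restrict to_B0_mul) => -[].
- by exists (e • f); [rewrite /B0_dom ef_avoids !orbT | exact: to_B0_avoids].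
- by exists a; [rewrite /B0_dom eqxx !orbT | exact: to_B0_a].
- by exists e; [rewrite /B0_dom eqxx | exact: to_B0_e].
- by exists f; [rewrite /B0_dom eqxx orbT | exact: to_B0_f].
Qed.

End B0Divisor.

Section IdempotentSandwich.
Variables (S : fsemigroup) (E F : S).
Hypotheses (EE : E • E = E) (FF : F • F = F) (EF_comm : E • F = F • E).
Hypothesis swap : forall p q, E • p • E • (F • q • F) = F • q • F • (E • p • E).

Let EEr w : w • E • E = w • E. Proof. by rewrite -sopA EE. Qed.
Let FFr w : w • F • F = w • F. Proof. by rewrite -sopA FF. Qed.
Let FEr w : w • F • E = w • E • F. Proof. by rewrite -sopA -EF_comm sopA. Qed.

(* For a = E y F = E a F, [swap] turns a = p (EF) q into a = EF u EF for some u,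
   so a = EF a EF = EF y EF. *)
Lemma ideal_EF_sandwich y p q :
  p • (E • F) • q = E • y • F -> E • y • F = E • F • y • (E • F).
Proof.
move=> pEFq.
have EyF_absorb : E • (E • y • F) • F = E • y • F by rewrite !sopA EE FFr.
have EyF_swap : E • y • F = F • q • F • (E • p • E).
  by rewrite -swap -EyF_absorb -pEFq !sopA.
have EyF_EF : E • y • F = E • F • q • F • E • p • E • F.
  by rewrite -EyF_absorb EyF_swap !sopA.
have : E • F • (E • y • F) • (E • F) = E • y • F.
  by rewrite EyF_EF !sopA !(EEr, FFr, FEr, EE, FF).
by move <-; rewrite !sopA !(EEr, FFr, FEr, EE, FF).
Qed.

Lemma B0_divides_of_sandwich y :
  E • y • F <> E • F • y • (E • F) -> divides B0 S.
Proof.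
move=> not_sandwich.
have EF_avoids : avoids (E • y • F) (E • F).
  by apply/avoidsP => p q /ideal_EF_sandwich.
have E_EyF : E • (E • y • F) = E • y • F by rewrite !sopA EE.
have EyF_F : E • y • F • F = E • y • F by rewrite FFr.
by apply: (B0_divides EE FF E_EyF EyF_F) => //; rewrite -EF_comm.
Qed.

End IdempotentSandwich.

Definition id_cube : term * term :=
  let x := Var 0 in (x * x * x, x * x)%term.

Definition id_idem_comm : term * term :=
  let x := Var 0 in let z := Var 2 in (x * x * (z * z), z * z * (x * x))%term.

Definition id_swap : term * term :=
  let x := Var 0 in let p := Var 1 in let z := Var 2 in let q := Var 3 in
  (x * x * p * (x * x) * (z * z * q * (z * z)),
   z * z * q * (z * z) * (x * x * p * (x * x)))%term.

Definition id_sandwich : term * term :=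
  let x := Var 0 in let y := Var 1 in let z := Var 2 in
  (x * x * y * (z * z), x * x * (z * z) * y * (x * x * (z * z)))%term.

Lemma B0_cube : satisfies id_cube B0.
Proof. by move=> s /=; case: (s 0). Qed.

Lemma B0_idem_comm : satisfies id_idem_comm B0.
Proof. by move=> s /=; case: (s 0); case: (s 2). Qed.

Lemma B0_swap : satisfies id_swap B0.
Proof. by move=> s /=; case: (s 0); case: (s 1); case: (s 2); case: (s 3). Qed.

Lemma B0_not_sandwich : ~ satisfies id_sandwich B0.
Proof. by move/(_ (nth B0z [:: B0e; B0a; B0f])). Qed.

Lemma square_idem (T : fsemigroup) (x : T) :
  satisfies id_cube T -> x • x • (x • x) = x • x.
Proof. by move=> cube; have /= xxx := cube (fun=> x); rewrite sopA !xxx. Qed.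

Lemma divides_B0_of_not_sandwich (T : fsemigroup) (s : nat -> T) :
  satisfies id_cube T -> satisfies id_idem_comm T -> satisfies id_swap T ->
  eval s id_sandwich.1 <> eval s id_sandwich.2 -> divides B0 T.
Proof.
move=> cube comm swap; apply: B0_divides_of_sandwich.
- exact: square_idem.
- exact: square_idem.
- exact: comm.
- by move=> p q; exact: (swap (nth (s 0) [:: s 0; p; s 2; q])).
Qed.

Lemma gen_B0_strictly_join_irreducible : strictly_join_irreducible (gen B0).
Proof.
move=> X X_pv genB0_join.
have W_genB0 W : X W -> subclass W (gen B0).
  by move=> XW T WT; apply/genB0_join; exact: join_ub WT.
have [[W [XW WB0]] | noB0] := classic (exists W, X W /\ W B0).
  exists W; split=> // T; split; last exact: W_genB0.
  exact: gen_min (X_pv W XW) WB0.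
have W_sandwich W : X W -> subclass W (satisfies id_sandwich).
  move=> XW T WT s; have genT := W_genB0 W XW T WT.
  apply: NNPP => /(divides_B0_of_not_sandwich (s := s)) B0_T.
  apply: noB0; exists W; split=> //; apply: pseudovariety_divides (X_pv W XW) _ WT.
  apply: B0_T; apply: gen_satisfies genT;
    [exact: B0_cube | exact: B0_idem_comm | exact: B0_swap].
exfalso; apply: B0_not_sandwich.
apply: (join_least (satisfies_pv _) W_sandwich).
by apply/genB0_join; exact: gen_self.
Qed.

Definition no_f (w : adjI B0) : bool := if w is Some B0f then false else true.
Definition no_e (w : adjI B0) : bool := if w is Some B0e then false else true.

Lemma no_f_mul x y : no_f x -> no_f y -> no_f (x • y).
Proof. by case: x => [[]|]; case: y => [[]|]. Qed.

Lemma no_e_mul x y : no_e x -> no_e y -> no_e (x • y).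
Proof. by case: x => [[]|]; case: y => [[]|]. Qed.

Definition B0I_no_f : fsemigroup := subsemigroup no_f_mul (ex_intro _ None isT).
Definition B0I_no_e : fsemigroup := subsemigroup no_e_mul (ex_intro _ None isT).

Definition id_xyx_yxx : term * term :=
  let x := Var 0 in let y := Var 1 in (x * y * x, y * x * x)%term.

Definition id_xyx_xxy : term * term :=
  let x := Var 0 in let y := Var 1 in (x * y * x, x * x * y)%term.

Lemma B0I_no_f_satisfies : satisfies id_xyx_yxx B0I_no_f.
Proof.
move=> s; apply: val_inj; rewrite !(eval_hom val_hom) /=.
by case: (s 0) => [[[]|] x_f]; case: (s 1) => [[[]|] y_f].
Qed.

Lemma B0I_no_e_satisfies : satisfies id_xyx_xxy B0I_no_e.
Proof.
move=> s; apply: val_inj; rewrite !(eval_hom val_hom) /=.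
by case: (s 0) => [[[]|] x_e]; case: (s 1) => [[[]|] y_e].
Qed.

Lemma B0_not_xyx_yxx : ~ satisfies id_xyx_yxx B0.
Proof. by move/(_ (nth B0z [:: B0f; B0a])). Qed.

Lemma B0_not_xyx_xxy : ~ satisfies id_xyx_xxy B0.
Proof. by move/(_ (nth B0z [:: B0e; B0a])). Qed.

Definition pair_dom (u v : adjI B0) : bool :=
  match u, v with
  | Some (B0z | B0a), Some (B0z | B0a)
  | Some B0e, Some B0f | Some B0e, None | None, Some B0f | None, None => true
  | _, _ => false
  end.

Definition pair_to_B0I (u v : adjI B0) : adjI B0 :=
  match u, v with
  | None, None => None
  | Some B0e, None => Some B0e
  | None, Some B0f => Some B0f
  | Some B0a, Some B0a => Some B0a
  | _, _ => Some B0z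
  end.

Lemma pair_to_B0I_mul u v u' v' : pair_dom u v -> pair_dom u' v' ->
  pair_dom (u • u') (v • v') /\
  pair_to_B0I (u • u') (v • v') = pair_to_B0I u v • pair_to_B0I u' v'.
Proof. by case: u => [[]|]; case: v => [[]|] //; case: u' => [[]|]; case: v' => [[]|]. Qed.

Lemma B0I_divides_prod : divides (adjI B0) (prod_sg B0I_no_f B0I_no_e).
Proof.
pose P (w : prod_sg B0I_no_f B0I_no_e) := pair_dom (val w.1) (val w.2).
pose h (w : prod_sg B0I_no_f B0I_no_e) := pair_to_B0I (val w.1) (val w.2).
apply: (@divides_restrict _ _ P h).
  by move=> [u v] [u' v']; exact: pair_to_B0I_mul.
case=> [[]|].
- by exists (exist _ (Some B0z) isT, exist _ (Some B0z) isT).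
- by exists (exist _ (Some B0a) isT, exist _ (Some B0a) isT).
- by exists (exist _ (Some B0e) isT, exist _ None isT).
- by exists (exist _ None isT, exist _ (Some B0f) isT).
- by exists (exist _ None isT, exist _ None isT).
Qed.

Lemma B0_divides_adjI : divides B0 (adjI B0).
Proof. exact: (@divides_embedding B0 (adjI B0) Some (fun _ _ => erefl) (@Some_inj _)). Qed.

Definition B0I_factors : sgclass -> Prop :=
  fun W => W = gen B0I_no_f \/ W = gen B0I_no_e.

Lemma B0I_factors_pv W : B0I_factors W -> pseudovariety W.
Proof. by case=> ->; exact: gen_pv. Qed.

Lemma B0_notin_B0I_factors W : B0I_factors W -> ~ W B0.
Proof.
case=> -> genB0.
- exact/B0_not_xyx_yxx/(gen_satisfies B0I_no_f_satisfies genB0).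
- exact/B0_not_xyx_xxy/(gen_satisfies B0I_no_e_satisfies genB0).
Qed.

Lemma gen_B0I_eq_join : eqclass (gen (adjI B0)) (join B0I_factors).
Proof.
have B0I_join : join B0I_factors (adjI B0).
  move=> V PV factors_V; have [_ V_prod _ _] := PV.
  apply: pseudovariety_divides PV B0I_divides_prod _.
  by apply: V_prod; apply: (factors_V _ _ _ (gen_self _)); rewrite /B0I_factors; [left | right].
move=> T; split; first exact: gen_min (join_pv B0I_factors) B0I_join.
apply: join_least (gen_pv (adjI B0)) _ => _ [->|->] S genS;
  apply: gen_min (gen_pv (adjI B0)) _ genS; apply: gen_divides.
- exact: (subsemigroup_divides no_f_mul).
- exact: (subsemigroup_divides no_e_mul).
Qed.

Lemma gen_B0_not_join_irreducible : ~ join_irreducible (gen B0).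
Proof.
have B0_join : join B0I_factors B0.
  apply: pseudovariety_divides (join_pv B0I_factors) B0_divides_adjI _.
  by apply/gen_B0I_eq_join; exact: gen_self.
move=> /(_ B0I_factors B0I_factors_pv) [|W [factor_W genB0_W]].
  by move=> T; exact: gen_min (join_pv B0I_factors) B0_join.
exact: B0_notin_B0I_factors factor_W (genB0_W B0 (gen_self B0)).
Qed.

Lemma gen_B0I_not_strictly_join_irreducible : ~ strictly_join_irreducible (gen (adjI B0)).
Proof.
move=> /(_ B0I_factors B0I_factors_pv gen_B0I_eq_join) [W [factor_W genB0I_W]].
apply: B0_notin_B0I_factors factor_W _.
by apply/genB0I_W; exact: gen_divides B0_divides_adjI.
Qed.

Theorem proposition3p1 :
  strictly_join_irreducible (gen B0) /\
  ~ join_irreducible (gen B0) /\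
  ~ strictly_join_irreducible (gen (adjI B0)).
Proof.
split; first exact: gen_B0_strictly_join_irreducible.
split; [exact: gen_B0_not_join_irreducible | exact: gen_B0I_not_strictly_join_irreducible].
Qed.
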